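(* Let $T$ be a countable tree with root $o$, and let $Q$ be a stochastic matrix on $T$ with $q(x,y)>0$ iff $x=y^-$. Let $\lambda\in\mathbb{C}\setminus\{0\}$ and $n\ge1$. Every $\lambda$-polyharmonic function $f$ of order $n$ for $Q$ has an integral representation $$f(x)=\sum_{r=0}^{n-1}\int_{\partial T}K_Q^{(r)}(x,\xi\mid\lambda)\,d\sigma_r(\xi),\qquad x\in T,$$ where the complex distributions $\sigma_0,\dots,\sigma_{n-1}$ are uniquely determined by $f$. Conversely, every function with such a representation is $\lambda$-polyharmonic of order $n$ for $Q$.
   Context: $|x|=d(o,x)$. $x^-$ is the neighbour of $x\ne o$ closer to $o$. $\partial T$ is the set of ends of $T$, and $\partial T_x$ is the set of ends whose geodesic ray from $o$ passes through $x$. $Qf(x)=\sum_{y:\,y^-=x}q(x,y)f(y)$, required to converge absolutely. $f$ is $\lambda$-polyharmonic of order $n$ for $Q$ if $(\lambda I-Q)^nf=0$. $q^{(n)}(o,x)=\prod_{i=1}^n q(x_{i-1},x_i)$ for $\pi(o,x)=[o=x_0,\dots,x_n=x]$. $K_Q(x,\xi\mid\lambda)=\lambda^{|x|}/q^{(|x|)}(o,x)$ if $x$ lies on the ray from $o$ to $\xi$, and $0$ otherwise. $K_Q^{(r)}$ denotes the $r$-th derivative with respect to $\lambda$; for fixed $x$ it is a constant multiple of the indicator of $\partial T_x$. A complex distribution is $\sigma:\{\partial T_x\}\to\mathbb{C}$ with $\sigma(\partial T_x)=\sum_{y^-=x}\sigma(\partial T_y)$, absolutely convergent. The integral of $c\cdot\mathbf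 1_{\partial T_x}$ is $c\,\sigma(\partial T_x)$. *)

From mathcomp Require Import all_boot all_algebra.
From mathcomp Require Import all_classical all_reals all_analysis.
From mathcomp Require Import complex.
Import GRing.Theory Num.Theory numFieldNormedType.Exports.

Set Implicit Arguments.
Unset Strict Implicit.
Unset Printing Implicit Defensive.

Local Open Scope ring_scope.

Section TreeDefs.
Variables (R : realType) (T : countType) (o : T) (par : T -> T).

(** A rooted tree on the countable vertex set [T], with root [o], given by the
    predecessor map [par] (x^- = par x for x <> o; [par o] is irrelevant).
    Edges are {x, par x} for x <> o; the tree condition is that every vertex
    reaches the root by finitely many predecessor steps. *)
Definition rooted_tree : Prop := forall x : T, exists k : nat, iter k par x = o.

Definition child (x y : T) : bool := (y != o) && (par y == x).

Definition depth (x : T) : nat :=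
  match pselect (exists k, [pred k | iter k par x == o] k) with
  | left h => ex_minn h
  | right _ => 0%N
  end.

(** Countable (unordered) sums over a subset [A] of [T], via the canonical
    enumeration of the countType: the n-th term is g y if n = pickle y, y in A. *)
Definition seqext (V : zmodType) (A : pred T) (g : T -> V) (k : nat) : V :=
  if @pickle_inv T k is Some y then (if A y then g y else 0) else 0.

Definition rsummable (A : pred T) (g : T -> R) : Prop :=
  cvgn (series (seqext A (fun y => `|g y|))).
Definition rsum (A : pred T) (g : T -> R) : R := limn (series (seqext A g)).

Definition csummable (A : pred T) (g : T -> R[i]) : Prop :=
  cvgn (series (seqext A (fun y => ComplexField.Normc.normc (g y)))).
Definition csum (A : pred T) (g : T -> R[i]) : R[i] :=
  Complex (limn (series (seqext A (fun y => complex.Re (g y)))))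
          (limn (series (seqext A (fun y => complex.Im (g y))))).

Definition stochastic (q : T -> T -> R) : Prop :=
  (forall x y, 0 <= q x y) /\
  (forall x, rsummable (fun _ => true) (q x) /\ rsum (fun _ => true) (q x) = 1).

Definition Qdefined (q : T -> T -> R) (f : T -> R[i]) : Prop :=
  forall x, csummable (child x) (fun y => (q x y)%:C%C * f y).
Definition Qop (q : T -> T -> R) (f : T -> R[i]) : T -> R[i] :=
  fun x => csum (child x) (fun y => (q x y)%:C%C * f y).

Definition Lop (q : T -> T -> R) (lam : R[i]) (f : T -> R[i]) : T -> R[i] :=
  fun x => lam * f x - Qop q f x.

Definition polyharmonic (q : T -> T -> R) (lam : R[i]) (n : nat)
    (f : T -> R[i]) : Prop :=
  (forall k, (k < n)%N -> Qdefined q (iter k (Lop q lam) f)) /\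
  (forall x, iter n (Lop q lam) f x = 0).

(** q^{(|x|)}(o,x): product of the transition probabilities along pi(o,x). *)
Definition qpath (q : T -> T -> R) (x : T) : R :=
  \prod_(i < depth x) q (par (iter i par x)) (iter i par x).

(** The constant c such that K_Q^{(r)}(x, . | lam) = c * 1_{dT_x}:
    c = (d/dlam)^r lam^{|x|} / q^{(|x|)}(o,x)   (formal derivative of 'X^{|x|}). *)
Definition Kcoef (q : T -> T -> R) (lam : R[i]) (r : nat) (x : T) : R[i] :=
  (('X^(depth x))^`(r)).[lam] / (qpath q x)%:C%C.

(** A complex distribution, sigma(dT_x) being stored as sigma x:
    sigma(dT_x) = sum_{y^- = x} sigma(dT_y), absolutely convergent. *)
Definition cdistr (sigma : T -> R[i]) : Prop :=
  forall x, csummable (child x) sigma /\ sigma x = csum (child x) sigma.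

(** The integral of c * 1_{dT_x} against sigma is c * sigma(dT_x). *)
Definition cyl_integral (sigma : T -> R[i]) (c : R[i]) (x : T) : R[i] :=
  c * sigma x.

Definition Krepr (q : T -> T -> R) (lam : R[i]) (n : nat)
    (sigma : 'I_n -> T -> R[i]) (x : T) : R[i] :=
  \sum_(r < n) cyl_integral (sigma r) (Kcoef q lam r x) x.

End TreeDefs.

(* Everything rests on how lam I - Q acts on the kernels.  For a distribution sigma,
   x |-> int K^(r)(x, . | lam) d sigma  is  D^r lam^|x| sigma(dT_x) / q^(|x|)(o,x)  with
   D = d/dlam.  As q(x,y) q^(|x|)(o,x) = q^(|y|)(o,y) and sigma(dT_x) is the sum of the
   sigma(dT_y) over the children y of x, applying Q raises |x| to |x|+1 in the numerator, and
   Leibniz's rule  lam D^r lam^M - D^r lam^(M+1) = -r D^(r-1) lam^M  shows that lam I - Q maps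
   the function represented by (sigma_0, ..., sigma_n) to the one represented by
   (-sigma_1, -2 sigma_2, ..., -n sigma_n).  Existence and uniqueness then follow by induction
   on the order from the case n = 1: the lam-harmonic functions are exactly
   x |-> lam^|x| sigma(dT_x) / q^(|x|)(o,x), the harmonicity equation at x being the
   additivity of sigma at x. *)

From mathcomp Require Import all_boot all_algebra.
From mathcomp Require Import all_classical all_reals all_analysis.
From mathcomp Require Import complex.
From mathcomp Require Import ring.
Import GRing.Theory Num.Theory numFieldNormedType.Exports.
Local Open Scope ring_scope.
Set Implicit Arguments.
Unset Strict Implicit.

Lemma series0 (V : zmodType) : series (0 : V^nat) = 0.
Proof. by apply/funext => k; rewrite /series /= big1. Qed.

Section CountableSums.
Variables (R : realType) (T : countType).
Local Notation normc := (@ComplexField.Normc.normc R).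
Implicit Types (A : pred T) (g h : T -> R[i]) (u v : T -> R).

Lemma normc_ge0 (z : R[i]) : 0 <= normc z.
Proof. by case: z => a b; rewrite /= sqrtr_ge0. Qed.

Lemma normc_ge_absRe (z : R[i]) : `|complex.Re z| <= normc z.
Proof. by case: z => a b /=; rewrite -sqrtr_sqr ler_wsqrtr // lerDl sqr_ge0. Qed.

Lemma normc_ge_absIm (z : R[i]) : `|complex.Im z| <= normc z.
Proof. by case: z => a b /=; rewrite -sqrtr_sqr ler_wsqrtr // lerDr sqr_ge0. Qed.

Lemma eq_seqext (V : zmodType) A (g h : T -> V) :
  (forall y, A y -> g y = h y) -> seqext A g = seqext A h.
Proof.
move=> e; apply/funext => k; rewrite /seqext.
by case: pickle_inv => // y; case: ifP => // /e ->.
Qed.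

Lemma seqextD A u v : seqext A (fun y => u y + v y) = seqext A u + seqext A v.
Proof.
apply/funext => k; rewrite -[RHS]/(seqext A u k + _) /seqext.
by case: pickle_inv => [y|]; [case: ifP|]; rewrite ?addr0.
Qed.

Lemma seqextZ A (c : R) u : seqext A (fun y => c * u y) = c *: seqext A u.
Proof.
apply/funext => k; rewrite -[RHS]/(c * seqext A u k) /seqext.
by case: pickle_inv => [y|]; [case: ifP|]; rewrite ?mulr0.
Qed.

Lemma seqext0 (V : zmodType) A : seqext A (fun _ : T => 0 : V) = 0.
Proof. by apply/funext => k; rewrite /seqext; case: pickle_inv => // y; case: ifP. Qed.

Definition rsum_cvg A u := cvgn (series (seqext A u)).

Lemma eq_rsum A u v : (forall y, A y -> u y = v y) -> rsum A u = rsum A v.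
Proof. by move=> e; rewrite /rsum (eq_seqext e). Qed.

Lemma rsum0 A : rsum A (fun _ => 0 : R) = 0.
Proof. by rewrite /rsum seqext0 series0 lim_cst. Qed.

Lemma rsum_cvgD A u v : rsum_cvg A u -> rsum_cvg A v -> rsum_cvg A (fun y => u y + v y).
Proof. by rewrite /rsum_cvg seqextD; apply: is_cvg_seriesD. Qed.

Lemma rsumD A u v : rsum_cvg A u -> rsum_cvg A v ->
  rsum A (fun y => u y + v y) = rsum A u + rsum A v.
Proof. by rewrite /rsum seqextD; apply: lim_seriesD. Qed.

Lemma rsum_cvgZ A c u : rsum_cvg A u -> rsum_cvg A (fun y => c * u y).
Proof. by rewrite /rsum_cvg seqextZ; apply: is_cvg_seriesZ. Qed.

Lemma rsumZ A c u : rsum_cvg A u -> rsum A (fun y => c * u y) = c * rsum A u.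
Proof. by rewrite /rsum seqextZ; apply: lim_seriesZ. Qed.

Lemma rsum_cvg_normc_le A u g : (forall y, `|u y| <= normc (g y)) ->
  csummable A g -> rsum_cvg A u.
Proof.
move=> le_ug hg; apply: normed_cvg; apply: (series_le_cvg _ _ _ hg) => k /=.
- exact: normr_ge0.
- by rewrite /seqext; case: pickle_inv => // y; case: ifP; rewrite ?normc_ge0.
- by rewrite /seqext; case: pickle_inv => [y|]; [case: ifP|]; rewrite ?normr0.
Qed.

Lemma csummable_Re A g : csummable A g -> rsum_cvg A (fun y => complex.Re (g y)).
Proof. by apply: rsum_cvg_normc_le => y; apply: normc_ge_absRe. Qed.

Lemma csummable_Im A g : csummable A g -> rsum_cvg A (fun y => complex.Im (g y)).
Proof. by apply: rsum_cvg_normc_le => y; apply: normc_ge_absIm. Qed.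

Lemma eq_csummable A g h : (forall y, A y -> g y = h y) ->
  csummable A g -> csummable A h.
Proof. by move=> e; rewrite /csummable (@eq_seqext _ A _ (fun y => normc (h y))) // => y /e ->. Qed.

Lemma eq_csum A g h : (forall y, A y -> g y = h y) -> csum A g = csum A h.
Proof. by move=> e; congr Complex; apply: eq_rsum => y /e ->. Qed.

Lemma csummable0 A : csummable A (fun _ => 0 : R[i]).
Proof.
rewrite /csummable (@eq_seqext _ A _ (fun _ => 0)) ?seqext0 ?series0.
  exact: (is_cvg_cst (0 : R)).
by move=> y _ /=; rewrite expr0n addr0 sqrtr0.
Qed.

Lemma csumE A g : csum A g =
  Complex (rsum A (fun y => complex.Re (g y))) (rsum A (fun y => complex.Im (g y))).
Proof. by []. Qed.

Lemma csum0 A : csum A (fun _ => 0 : R[i]) = 0.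
Proof. by rewrite csumE rsum0. Qed.

Lemma csummableD A g h : csummable A g -> csummable A h ->
  csummable A (fun y => g y + h y).
Proof.
move=> hg hh; apply: (series_le_cvg (v_ := seqext A (fun y => normc (g y) + normc (h y)))).
- by move=> k; rewrite /seqext; case: pickle_inv => // y; case: ifP; rewrite ?normc_ge0.
- by move=> k; rewrite /seqext; case: pickle_inv => // y; case: ifP; rewrite ?addr_ge0 ?normc_ge0.
- by move=> k; rewrite /seqext; case: pickle_inv => // y; case: ifP; rewrite ?le_normcD.
- exact: rsum_cvgD.
Qed.

Lemma csummableZ A c g : csummable A g -> csummable A (fun y => c * g y).
Proof.
rewrite /csummable (@eq_seqext _ A (fun y => normc (c * g y)) (fun y => normc c * normc (g y))).
  exact: rsum_cvgZ.
by move=> y _; rewrite ComplexField.Normc.normcM.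
Qed.

Lemma csumD A g h : csummable A g -> csummable A h ->
  csum A (fun y => g y + h y) = csum A g + csum A h.
Proof.
move=> hg hh; rewrite !csumE.
rewrite (@eq_rsum _ (fun y => complex.Re (g y + h y))
  (fun y => complex.Re (g y) + complex.Re (h y))); last by move=> y _; case: (g y); case: (h y).
rewrite (@eq_rsum _ (fun y => complex.Im (g y + h y))
  (fun y => complex.Im (g y) + complex.Im (h y))); last by move=> y _; case: (g y); case: (h y).
have [rg ig] := (csummable_Re hg, csummable_Im hg).
have [rh ih] := (csummable_Re hh, csummable_Im hh).
by rewrite !rsumD.
Qed.

Lemma csumZ A c g : csummable A g -> csum A (fun y => c * g y) = c * csum A g.
Proof.
move=> hg; have [rg ig] := (csummable_Re hg, csummable_Im hg).
rewrite !csumE.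
rewrite (@eq_rsum _ (fun y => complex.Re (c * g y))
  (fun y => complex.Re c * complex.Re (g y) + (- complex.Im c) * complex.Im (g y)));
  last by move=> y _; case: (g y); case: c => a b x z /=; rewrite mulNr.
rewrite (@eq_rsum _ (fun y => complex.Im (c * g y))
  (fun y => complex.Im c * complex.Re (g y) + complex.Re c * complex.Im (g y)));
  last by move=> y _; case: (g y); case: c => a b x z /=; rewrite addrC.
rewrite !rsumD ?rsumZ //; try by apply: rsum_cvgZ.
by case: c => a b; rewrite /= mulNr [b * _ + _]addrC.
Qed.

Lemma csum_sum A m (F : 'I_m -> T -> R[i]) : (forall r, csummable A (F r)) ->
  csummable A (\sum_(r < m) F r) /\ csum A (\sum_(r < m) F r) = \sum_(r < m) csum A (F r).
Proof.
move=> hF; apply: (big_ind2 (fun g z => csummable A g /\ csum A g = z)) => //.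
- by rewrite csum0; split => //; apply: csummable0.
- by move=> g1 z1 g2 z2 [h1 <-] [h2 <-]; rewrite csumD //; split => //; apply: csummableD.
Qed.

End CountableSums.

Definition fcons (X : Type) m (x : X) (f : 'I_m -> X) (i : 'I_m.+1) : X :=
  if unlift ord0 i is Some j then f j else x.

Lemma fcons0 (X : Type) m (x : X) (f : 'I_m -> X) : fcons x f ord0 = x.
Proof. by rewrite /fcons unlift_none. Qed.

Lemma fconsS (X : Type) m (x : X) (f : 'I_m -> X) j : fcons x f (lift ord0 j) = f j.
Proof. by rewrite /fcons liftK. Qed.

Section Tree.
Variables (R : realType) (T : countType) (o : T) (par : T -> T).
Hypothesis rooted : rooted_tree o par.

Local Notation depth := (depth o par).
Local Notation child := (child o par).

Lemma depthP x : iter (depth x) par x = o /\ forall j, (j < depth x)%N -> iter j par x != o.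
Proof.
rewrite /depth; case: pselect => [ex|nex]; last first.
  by have [k kx] := rooted x; case: nex; exists k; apply/eqP.
case: ex_minnP => m /eqP -> min_m; split => // j lt_jm; apply/eqP => jx.
by have := min_m j (introT eqP jx); rewrite leqNgt lt_jm.
Qed.

Lemma depth_unique x k : iter k par x = o ->
  (forall j, (j < k)%N -> iter j par x != o) -> depth x = k.
Proof.
move=> kx min_k; have [dx min_d] := depthP x.
case: (ltngtP (depth x) k) => [/min_k|/min_d|//]; first by rewrite dx eqxx.
by rewrite kx eqxx.
Qed.

Lemma depth_child x y : child x y -> depth y = (depth x).+1.
Proof.
case/andP => yo /eqP yx; have [dx min_d] := depthP x.
apply: depth_unique; first by rewrite iterSr yx.
by case=> [|j] // lt_jd; rewrite iterSr yx min_d.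
Qed.

Variable q : T -> T -> R.
Hypothesis q_pos : forall x y, 0 < q x y <-> child x y.

Local Notation qpath := (qpath o par q).
Local Notation Qdefined := (Qdefined o par q).
Local Notation Qop := (Qop o par q).
Local Notation cdistr := (cdistr o par).

Lemma qpath_child x y : child x y -> qpath y = q x y * qpath x.
Proof.
move=> xy; rewrite /qpath (depth_child xy) big_ord_recl /=.
case/andP: xy => _ /eqP yx; rewrite yx; congr (_ * _).
by apply: eq_bigr => i _; rewrite -iterS iterSr yx.
Qed.

Lemma qpath_neq0 x : (qpath x)%:C%C != 0 :> R[i].
Proof.
rewrite fmorph_eq0 lt0r_neq0 // /qpath; apply: prodr_gt0 => i _; apply/q_pos.
by have [_ min_d] := depthP x; rewrite /child min_d // eqxx.
Qed.

Lemma q_child_neq0 x y : child x y -> (q x y)%:C%C != 0 :> R[i].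
Proof. by move=> /q_pos q_gt0; rewrite fmorph_eq0 lt0r_neq0. Qed.

Lemma cdistr0 : cdistr (fun _ => 0 : R[i]).
Proof. by move=> x; rewrite csum0; split => //; apply: csummable0. Qed.

Lemma cdistrZ c (s : T -> R[i]) : cdistr s -> cdistr (fun y => c * s y).
Proof.
by move=> sP x; have [xS xE] := sP x; rewrite csumZ // -xE; split => //; apply: csummableZ.
Qed.

Lemma cdistr_fcons m (c : T -> R[i]) (v : 'I_m -> T -> R[i]) :
  cdistr c -> (forall i, cdistr (v i)) -> forall r, cdistr (fcons c v r).
Proof. by move=> cP vP r; case: (unliftP ord0 r) => [j ->|->]; rewrite ?fconsS ?fcons0. Qed.

Lemma QopB (f g : T -> R[i]) : Qdefined f -> Qdefined g ->
  Qdefined (fun y => f y - g y) /\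
  forall x, Qop (fun y => f y - g y) x = Qop f x - Qop g x.
Proof.
move=> fQ gQ.
have e x y : child x y ->
    (q x y)%:C%C * f y + (-1) * ((q x y)%:C%C * g y) = (q x y)%:C%C * (f y - g y).
  by rewrite mulN1r -mulrBr.
split => x.
  by apply: (eq_csummable (e x)); apply: csummableD; [apply: fQ | apply: csummableZ; apply: gQ].
by rewrite /Qop -(eq_csum (e x)) csumD ?csumZ ?mulN1r //; apply: csummableZ.
Qed.

Variable lam : R[i].
Hypothesis lam_neq0 : lam != 0.

Local Notation Lop := (Lop o par q lam).
Local Notation Kcoef := (Kcoef o par q lam).
Local Notation Krepr := (Krepr o par q lam).
Local Notation polyharmonic := (polyharmonic o par q lam).

Lemma LopB (f g : T -> R[i]) : Qdefined f -> Qdefined g ->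
  Qdefined (fun y => f y - g y) /\
  forall x, Lop (fun y => f y - g y) x = Lop f x - Lop g x.
Proof.
move=> fQ gQ; have [fgQ fgE] := QopB fQ gQ; split => // x.
by rewrite /Lop fgE; ring.
Qed.

Lemma polyharmonic0 f : polyharmonic 0 f <-> forall x, f x = 0.
Proof. by split => [[]|] //. Qed.

Lemma polyharmonicS n f :
  polyharmonic n.+1 f <-> Qdefined f /\ polyharmonic n (Lop f).
Proof.
split => [[fQ fE] | [fQ [LfQ LfE]]].
- split; first exact: (fQ 0%N).
  by split => [k kn | x]; rewrite -iterSr; [apply: fQ | apply: fE].
- by split => [[|k] // | x]; rewrite iterSr; [apply: LfQ | apply: LfE].
Qed.

Definition dXn r M := (('X^M)^`(r)).[lam].

Lemma dXn0 M : dXn 0 M = lam ^+ M.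
Proof. by rewrite /dXn derivn0 hornerXn. Qed.

Lemma dXn_Leibniz r M :
  lam * dXn r M - dXn r M.+1 = if r is r'.+1 then - r%:R * dXn r' M else 0.
Proof.
case: r => [|r]; first by rewrite !dXn0 exprS subrr.
rewrite /dXn exprSr -(addr0 ('X^M * 'X)) -polyC0 derivnMXaddC.
by rewrite hornerD hornerMn hornerMX mulrC opprD addrCA subrr addr0 mulNr mulr_natl.
Qed.

Lemma Kcoef_child r x y : child x y ->
  (q x y)%:C%C * Kcoef r y = dXn r (depth x).+1 / (qpath x)%:C%C.
Proof.
move=> xy; rewrite /Kcoef (depth_child xy) (qpath_child xy) rmorphM /= -/(dXn _ _).
by rewrite invfM mulrCA mulVKf ?q_child_neq0.
Qed.

Lemma Qop_Krepr m (s : 'I_m -> T -> R[i]) x : (forall r, cdistr (s r)) ->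
  csummable (child x) (fun y => (q x y)%:C%C * Krepr s y) /\
  Qop (Krepr s) x = \sum_(r < m) dXn r (depth x).+1 / (qpath x)%:C%C * s r x.
Proof.
move=> sP; pose F (r : 'I_m) y := dXn r (depth x).+1 / (qpath x)%:C%C * s r y.
have FE y : child x y -> (\sum_(r < m) F r) y = (q x y)%:C%C * Krepr s y.
  move=> xy; rewrite fct_sumE /Krepr /cyl_integral mulr_sumr; apply: eq_bigr => r _.
  by rewrite mulrA Kcoef_child.
have [FS FsumE] := @csum_sum _ _ (child x) m F (fun r => csummableZ (sP r x).1).
split; first exact: eq_csummable FE FS.
rewrite /Qop -(eq_csum FE) FsumE; apply: eq_bigr => r _.
by rewrite csumZ -?(sP r x).2 //; case: (sP r x).
Qed.

Lemma Qdefined_Krepr m (s : 'I_m -> T -> R[i]) : (forall r, cdistr (s r)) ->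
  Qdefined (Krepr s).
Proof. by move=> sP x; case: (Qop_Krepr x sP). Qed.

Definition dshift m (s : 'I_m.+1 -> T -> R[i]) (i : 'I_m) y := - i.+1%:R * s (lift ord0 i) y.

Lemma cdistr_dshift m (s : 'I_m.+1 -> T -> R[i]) :
  (forall r, cdistr (s r)) -> forall i, cdistr (dshift s i).
Proof. by move=> sP i; apply: cdistrZ. Qed.

Lemma Lop_Krepr m (s : 'I_m.+1 -> T -> R[i]) : (forall r, cdistr (s r)) ->
  forall x, Lop (Krepr s) x = Krepr (dshift s) x.
Proof.
move=> sP x; rewrite /Lop (Qop_Krepr x sP).2 /Krepr /cyl_integral mulr_sumr -sumrB.
have termE (r : 'I_m.+1) :
    lam * (Kcoef r x * s r x) - dXn r (depth x).+1 / (qpath x)%:C%C * s r x =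
    (lam * dXn r (depth x) - dXn r (depth x).+1) / (qpath x)%:C%C * s r x.
  by rewrite /Kcoef mulrA -mulrBl mulrA -mulrBl.
rewrite (eq_bigr _ (fun r _ => termE r)) big_ord_recl dXn_Leibniz !mul0r add0r.
by apply: eq_bigr => i _; rewrite dXn_Leibniz lift0 /dshift /Kcoef -/(dXn _ _); ring.
Qed.

Lemma polyharmonic_Krepr m (s : 'I_m -> T -> R[i]) : (forall r, cdistr (s r)) ->
  polyharmonic m (Krepr s).
Proof.
elim: m s => [|m IH] s sP; first by apply/polyharmonic0 => x; rewrite /Krepr big_ord0.
apply/polyharmonicS; split; first exact: Qdefined_Krepr.
by rewrite (funext (Lop_Krepr sP)); apply/IH/cdistr_dshift.
Qed.

Lemma Kcoef0E x : Kcoef 0 x = lam ^+ depth x / (qpath x)%:C%C.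
Proof. by rewrite /Kcoef -/(dXn _ _) dXn0. Qed.

Lemma Kcoef0_neq0 x : Kcoef 0 x != 0.
Proof. by rewrite Kcoef0E mulf_neq0 ?invr_eq0 ?qpath_neq0 ?expf_neq0. Qed.

Lemma harmonic_cdistr h : Qdefined h -> (forall x, Lop h x = 0) ->
  cdistr (fun x => (Kcoef 0 x)^-1 * h x).
Proof.
move=> hQ hL x.
have e y : child x y -> (lam * Kcoef 0 x)^-1 * ((q x y)%:C%C * h y) = (Kcoef 0 y)^-1 * h y.
  move=> xy; rewrite [lam * _](_ : _ = (q x y)%:C%C * Kcoef 0 y); last first.
    by rewrite Kcoef_child // dXn0 Kcoef0E exprS mulrA.
  by rewrite invfM [_^-1 * _]mulrC -mulrA mulKf ?q_child_neq0.
split; first exact: eq_csummable e (csummableZ (hQ x)).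
rewrite -(eq_csum e) csumZ ?hQ //.
have QhE : Qop h x = lam * h x by apply/esym/eqP; rewrite -subr_eq0; apply/eqP/hL.
by rewrite -[csum _ _]/(Qop h x) QhE [(lam * _)^-1]invfM [lam^-1 * _]mulrC -mulrA mulKf.
Qed.

Lemma Krepr_fcons m c (v : 'I_m -> T -> R[i]) x :
  Krepr (fcons c v) x = Kcoef 0 x * c x + Krepr (fcons (fun _ => 0) v) x.
Proof.
rewrite /Krepr /cyl_integral !big_ord_recl !fcons0 mulr0 add0r; congr (_ + _).
by apply: eq_bigr => i _; rewrite !fconsS.
Qed.

Lemma Krepr_of_polyharmonic m f : polyharmonic m f ->
  exists s : 'I_m -> T -> R[i], (forall r, cdistr (s r)) /\ forall x, f x = Krepr s x.
Proof.
elim: m f => [|m IH] f.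
  move=> /polyharmonic0 f0; exists (fun _ _ => 0); split => [[]//|x].
  by rewrite f0 /Krepr big_ord0.
case/polyharmonicS => fQ /IH [rho [rhoP LfE]].
pose v (i : 'I_m) y := - (i.+1%:R)^-1 * rho i y.
have vP i : cdistr (v i) by apply: cdistrZ.
pose g := Krepr (fcons (fun _ => 0) v).
have uP := cdistr_fcons cdistr0 vP.
have LgE x : Lop g x = Lop f x.
  rewrite Lop_Krepr // LfE; apply: eq_bigr => i _; congr (_ * _).
  by rewrite /dshift fconsS mulrA mulrNN mulfV ?mul1r // pnatr_eq0.
have [hQ LhE] := LopB fQ (Qdefined_Krepr uP).
have hP : cdistr (fun x => (Kcoef 0 x)^-1 * (f x - g x)).
  by apply: harmonic_cdistr hQ _ => x; rewrite LhE LgE subrr.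
exists (fcons (fun x => (Kcoef 0 x)^-1 * (f x - g x)) v); split.
- exact: cdistr_fcons hP vP.
- by move=> x; rewrite Krepr_fcons mulVKf ?Kcoef0_neq0 // subrK.
Qed.

Lemma Krepr_inj m (s t : 'I_m -> T -> R[i]) :
  (forall r, cdistr (s r)) -> (forall r, cdistr (t r)) ->
  (forall x, Krepr s x = Krepr t x) -> forall r x, s r x = t r x.
Proof.
elim: m s t => [|m IH] s t sP tP eK r x; first by case: r.
have tailE i y : s (lift ord0 i) y = t (lift ord0 i) y.
  have sh : forall z, Krepr (dshift s) z = Krepr (dshift t) z.
    by move=> z; rewrite -!Lop_Krepr // (funext eK).
  have := IH _ _ (cdistr_dshift sP) (cdistr_dshift tP) sh i y.
  by move/mulfI; apply; rewrite oppr_eq0 pnatr_eq0.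
case: (unliftP ord0 r) => [j ->|->]; first exact: tailE.
have := eK x; rewrite /Krepr /cyl_integral !big_ord_recl.
under eq_bigr do rewrite tailE.
by move/addIr/mulfI; apply; apply: Kcoef0_neq0.
Qed.

End Tree.

Theorem proposition6p2 (R : realType) (T : countType) (o : T) (par : T -> T)
    (q : T -> T -> R) (lam : R[i]) (n : nat) :
  rooted_tree o par ->
  stochastic q ->
  (forall x y, 0 < q x y <-> child o par x y) ->
  lam != 0 ->
  (0 < n)%N ->
  (forall f : T -> R[i], polyharmonic o par q lam n f ->
     exists sigma : 'I_n -> T -> R[i],
       (forall r, cdistr o par (sigma r)) /\
       (forall x, f x = Krepr o par q lam sigma x) /\
       (forall tau : 'I_n -> T -> R[i],
          (forall r, cdistr o par (tau r)) ->
          (forall x, f x = Krepr o par q lam tau x) ->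
          forall r x, tau r x = sigma r x)) /\
  (forall sigma : 'I_n -> T -> R[i],
     (forall r, cdistr o par (sigma r)) ->
     polyharmonic o par q lam n (Krepr o par q lam sigma)).
Proof.
move=> rooted _ q_pos lam_neq0 _; split=> [f fP | s sP]; last exact: polyharmonic_Krepr.
have [s [sP fE]] := Krepr_of_polyharmonic rooted q_pos lam_neq0 fP.
exists s; split=> //; split=> // t tP tE.
by apply: (Krepr_inj rooted q_pos lam_neq0 tP sP) => x; rewrite -tE fE.
Qed.
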